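(* Let $\mathcal Y$ be finite, $X\sim\mathbb P_X$ on $\mathcal X$, $r:\mathcal X\times\mathcal Y\to[0,\infty)$ bounded with $\|r\|_\infty=\sup_{x,y}r(x,y)$, and $g:\mathcal X\times[K]\to[0,1]$ with $\mathbb E_X[g(X,k)]>0$ for all $k$. Let $\mathcal C=\{(y_c,\mathcal I_c)\}_{c\in[C]}$ and $\alpha\in[0,1]$. Let $\mathrm{OPT}$ be the optimal value of the Primal LP$(r,g,\mathbb P_X,\mathcal C,\alpha)$. 1. For any $\hat r:\mathcal X\times\mathcal Y\to[0,\infty)$, let $\varepsilon_{\hat r}=\mathbb E_X\big[\sum_{y\in\mathcal Y}|\hat r(X,y)-r(X,y)|\big]$. If $\hat\pi$ is a minimizer of the Primal LP$(\hat r,g,\mathbb P_X,\mathcal C,\alpha)$, then $\mathbb E_X\big[\sum_{y}r(X,y)\hat\pi(X,y)\big]\le\mathrm{OPT}+\varepsilon_{\hat r}$. 2. For any $\hat g:\mathcal X\times[K]\to[0,1]$ with $\mathbb E_X[\hat g(X,k)]>0$ for all $k$, let $$\varepsilon_{\hat g}=\max_{k\in[K]}\mathbb E_X\Big[\Big|\frac{\hat g(X,k)}{\mathbb E_X[\hat g(X,k)]}-\frac{g(X,k)}{\mathbb E_X[g(X,k)]}\Big|\Big];$$ then $\varepsilon_{\hat g}\le\max_{k\in[K]}\frac{2\mathbb E_X[|\hat g(X,k)-g(X,k)|]}{\mathbb E_X[g(X,k)]}$. If $\hat\pi$ is a minimizer of the Primal LP$(r,\hat g,\mathbb P_X,\mathcal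 C,\alpha)$, then $$\mathbb E_X\Big[\sum_{y}r(X,y)\hat\pi(X,y)\Big]\le\mathrm{OPT}+2\|r\|_\infty\min\Big(1-\alpha,\frac{\varepsilon_{\hat g}}{\alpha+\varepsilon_{\hat g}}\Big)$$ (with the convention $0/0:=0$), and for all $c\in[C]$, $$\max_{k,k'\in\mathcal I_c}\Big|\mathbb E_X\Big[\Big(\frac{g(X,k)}{\mathbb E_X[g(X,k)]}-\frac{g(X,k')}{\mathbb E_X[g(X,k')]}\Big)\hat\pi(X,y_c)\Big]\Big|\le\min(1,\alpha+\varepsilon_{\hat g}).$$
   Context: Primal LP$(r,g,P,\mathcal C,\alpha)$ for a distribution $P$ on $\mathcal X$, $r:\mathcal X\times\mathcal Y\to[0,\infty)$, $g:\mathcal X\times[K]\to[0,1]$, constraints $\mathcal C=\{(y_c,\mathcal I_c)\}_{c\in[C]}$ ($y_c\in\mathcal Y$, $\mathcal I_c\subseteq[K]$) and $\alpha\in[0,1]$: minimize over $\pi:\mathcal X\times\mathcal Y\to[0,\infty)$ and $q\in\mathbb R^C$ the objective $\mathbb E_{X\sim P}[\sum_{y\in\mathcal Y}r(X,y)\pi(X,y)]$ subject to $\sum_{y}\pi(x,y)=1$ for all $x\in\mathcal X$ and $\big|\mathbb E_{X\sim P}\big[\frac{g(X,k)}{\mathbb E_{X\sim P}[g(X,k)]}\pi(X,y_c)\big]-q_c\big|\le\alpha/2$ for all $c\in[C]$, $k\in\mathcal I_c$. A feasible $\pi$ represents a randomized classifier with $\pi(x,y)=\Pr(h(X)=y\mid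 X=x)$. When $g(x,k)=\Pr(Z_k=1\mid X=x)$ and $P$ is the law of $X$, the normalizer equals $\Pr(Z_k=1)$ and the constraints are $\alpha$-group fairness. *)

From HB Require Import structures.
From mathcomp Require Import all_boot all_order all_algebra.
From mathcomp Require Import all_classical all_reals all_analysis.
Set Implicit Arguments. Unset Strict Implicit. Unset Printing Implicit Defensive.
Import Order.TTheory GRing.Theory Num.Theory.
Local Open Scope ring_scope.
Local Open Scope classical_set_scope.

Section LP.
Context {d : measure_display} {T : measurableType d} {R : realType}
  {Y : finType} {K C : nat}.

(* Real-valued expectation, used only for bounded measurable integrands. *)
Definition Ex (P : probability T R) (f : T -> R) : R :=
  fine (\int[P]_x (f x)%:E)%E.

Definition lp_obj (P : probability T R) (r : T -> Y -> R) (pi : T -> Y -> R)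
  : \bar R := (\int[P]_x (\sum_(y : Y) r x y * pi x y)%:E)%E.

Definition lp_feasible (P : probability T R) (g : T -> 'I_K -> R)
  (yc : 'I_C -> Y) (Ic : 'I_C -> {set 'I_K}) (alpha : R) (pi : T -> Y -> R)
  : Prop :=
  [/\ (forall x y, 0 <= pi x y),
      (forall x, \sum_(y : Y) pi x y = 1),
      (forall y, measurable_fun setT (fun x => pi x y)) &
      exists q : 'I_C -> R, forall c k, k \in Ic c ->
        `| Ex P (fun x => g x k / Ex P (fun z => g z k) * pi x (yc c)) - q c |
          <= alpha / 2].

Definition lp_opt (P : probability T R) (r : T -> Y -> R) (g : T -> 'I_K -> R)
  (yc : 'I_C -> Y) (Ic : 'I_C -> {set 'I_K}) (alpha : R) : \bar R :=
  ereal_inf [set lp_obj P r pi | pi in lp_feasible P g yc Ic alpha].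

Definition lp_minimizer (P : probability T R) (r : T -> Y -> R)
  (g : T -> 'I_K -> R) (yc : 'I_C -> Y) (Ic : 'I_C -> {set 'I_K}) (alpha : R)
  (pi : T -> Y -> R) : Prop :=
  lp_feasible P g yc Ic alpha pi /\
  forall pi', lp_feasible P g yc Ic alpha pi' ->
    (lp_obj P r pi <= lp_obj P r pi')%E.

Definition eps_r (P : probability T R) (rh r : T -> Y -> R) : \bar R :=
  (\int[P]_x (\sum_(y : Y) `|rh x y - r x y|)%:E)%E.

Definition eps_g (P : probability T R) (gh g : T -> 'I_K -> R) : R :=
  \big[Num.max/0]_(k < K)
    Ex P (fun x => `| gh x k / Ex P (fun z => gh z k)
                      - g x k / Ex P (fun z => g z k) |).

Definition sup_norm (r : T -> Y -> R) : R :=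
  sup [set r x y | x in [set: T] & y in [set: Y]].

End LP.

From HB Require Import structures.
From mathcomp Require Import all_boot all_order all_algebra.
From mathcomp Require Import all_classical all_reals all_analysis.
From mathcomp Require Import lra ring measurable_realfun.
Set Implicit Arguments. Unset Strict Implicit. Unset Printing Implicit Defensive.
Import Order.TTheory GRing.Theory Num.Theory.
Local Open Scope ring_scope.
Local Open Scope classical_set_scope.

(** Write [w_k = g_k / E g_k].  Part 1 is the plug-in argument: for any feasible [pi],
    minimality of [pih] for [rh] and [0 <= pi, pih <= 1] give
    [E (r pih) - E (r pi) <= E ((r - rh) (pih - pi)) <= eps_rh].
    For part 2, [E (wh_k - w_k) = 0] and [0 <= pi <= 1] give
    [|E ((wh_k - w_k) pi)| <= E |wh_k - w_k| / 2 <= eps / 2], so a classifier that is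
    [alpha]-fair for one family of weights is [(alpha + eps)]-fair for the other; this is the
    fairness bound.  For the cost, mixing a [g]-feasible [pi] with a constant classifier with
    weight [t = min (1 - alpha) (eps / (alpha + eps))] scales every fairness violation by
    [1 - t], which turns either the [(alpha + eps)]-fairness of [pi] for [gh] or the trivial
    [1]-fairness into [alpha]-fairness, while the cost grows by at most [t * ||r||_oo]. *)

Section expectation.
Context {d : measure_display} {T : measurableType d} {R : realType}.
Variable P : probability T R.
Implicit Types (f h p : T -> R).

Definition bounded_measurable f :=
  measurable_fun setT f /\ exists M : R, forall x, `|f x| <= M.

Lemma bounded_measurable_cst c : bounded_measurable (fun=> c).
Proof. by split; [exact: measurable_cst | exists `|c|]. Qed.

Lemma bounded_measurable01 f :
  measurable_fun setT f -> (forall x, 0 <= f x <= 1) -> bounded_measurable f.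
Proof.
move=> mf f01; split => //; exists 1 => x.
by have /andP[f0 f1] := f01 x; rewrite ger0_norm.
Qed.

Lemma bounded_measurableD f h :
  bounded_measurable f -> bounded_measurable h ->
  bounded_measurable (fun x => f x + h x).
Proof.
move=> [mf [M fM]] [mh [N hN]]; split; first exact: measurable_funD.
by exists (M + N) => x; apply: le_trans (ler_normD _ _) (lerD _ _).
Qed.

Lemma bounded_measurableN f :
  bounded_measurable f -> bounded_measurable (fun x => - f x).
Proof.
move=> [mf [M fM]]; split; first exact: measurableT_comp.
by exists M => x; rewrite normrN.
Qed.

Lemma bounded_measurableB f h :
  bounded_measurable f -> bounded_measurable h ->
  bounded_measurable (fun x => f x - h x).
Proof. by move=> bf bh; apply: bounded_measurableD => //; exact: bounded_measurableN. Qed.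

Lemma bounded_measurableM f h :
  bounded_measurable f -> bounded_measurable h ->
  bounded_measurable (fun x => f x * h x).
Proof.
move=> [mf [M fM]] [mh [N hN]]; split; first exact: measurable_funM.
by exists (M * N) => x; rewrite normrM ler_pM.
Qed.

Lemma bounded_measurable_norm f :
  bounded_measurable f -> bounded_measurable (fun x => `|f x|).
Proof.
move=> [mf [M fM]]; split; first exact: measurableT_comp.
by exists M => x; rewrite normr_id.
Qed.

Lemma bounded_measurable_integrable f :
  bounded_measurable f -> P.-integrable setT (EFin \o f).
Proof.
move=> [mf [M fM]]; apply: measurable_bounded_integrable => //.
  by rewrite -ge0_fin_numE // fin_num_measure.
exists M; split; first by rewrite num_real.
by move=> M' M'M x _ /=; exact: le_trans (fM x) (ltW M'M).
Qed.

Lemma eq_Ex f h : f =1 h -> Ex P f = Ex P h.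
Proof. by move=> /funext ->. Qed.

Lemma ExD f h : bounded_measurable f -> bounded_measurable h ->
  Ex P (fun x => f x + h x) = Ex P f + Ex P h.
Proof.
by move=> /bounded_measurable_integrable If /bounded_measurable_integrable Ih;
  exact: RintegralD.
Qed.

Lemma ExB f h : bounded_measurable f -> bounded_measurable h ->
  Ex P (fun x => f x - h x) = Ex P f - Ex P h.
Proof.
by move=> /bounded_measurable_integrable If /bounded_measurable_integrable Ih;
  exact: RintegralB.
Qed.

Lemma ExZl c f : bounded_measurable f -> Ex P (fun x => c * f x) = c * Ex P f.
Proof. by move=> /bounded_measurable_integrable If; exact: RintegralZl. Qed.

Lemma ExZr c f : bounded_measurable f -> Ex P (fun x => f x * c) = Ex P f * c.
Proof. by move=> /bounded_measurable_integrable If; exact: RintegralZr. Qed.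

Lemma le_Ex f h : bounded_measurable f -> bounded_measurable h ->
  (forall x, f x <= h x) -> Ex P f <= Ex P h.
Proof.
move=> /bounded_measurable_integrable If /bounded_measurable_integrable Ih fh.
exact: le_Rintegral.
Qed.

Lemma le_normr_Ex f : bounded_measurable f -> `|Ex P f| <= Ex P (fun x => `|f x|).
Proof. by move=> /bounded_measurable_integrable If; exact: le_normr_Rintegral. Qed.

Lemma Ex_ge0 f : (forall x, 0 <= f x) -> 0 <= Ex P f.
Proof. by move=> f0; exact: Rintegral_ge0. Qed.

(* Since [E f = 0], [p] may be replaced by [p - 1/2], whose modulus is at most [1/2]. *)
Lemma normr_Ex_centered_mul f p :
  bounded_measurable f -> bounded_measurable p ->
  Ex P f = 0 -> (forall x, 0 <= p x <= 1) ->
  `|Ex P (fun x => f x * p x)| <= Ex P (fun x => `|f x|) / 2.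
Proof.
move=> bf bp Ef0 p01.
have bp' : bounded_measurable (fun x => p x - 2^-1).
  by apply: bounded_measurableB => //; exact: bounded_measurable_cst.
have bfp' : bounded_measurable (fun x => f x * (p x - 2^-1)).
  exact: bounded_measurableM.
have -> : Ex P (fun x => f x * p x) = Ex P (fun x => f x * (p x - 2^-1)).
  rewrite (@eq_Ex (fun x => f x * (p x - 2^-1)) (fun x => f x * p x - f x * 2^-1));
    last by move=> x; rewrite mulrBr.
  rewrite ExB ?ExZr ?Ef0 ?mul0r ?subr0 //; apply: bounded_measurableM => //.
  exact: bounded_measurable_cst.
apply: le_trans (le_normr_Ex bfp') _.
rewrite -ExZr; last exact: bounded_measurable_norm.
apply: le_Ex => [||x].
- exact: bounded_measurable_norm.
- by apply: bounded_measurableM; [exact: bounded_measurable_norm | exact: bounded_measurable_cst].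
- rewrite normrM ler_wpM2l // ler_norml.
  by have /andP[p0 p1] := p01 x; apply/andP; split; lra.
Qed.

Definition normalized f x := f x / Ex P f.

Lemma bounded_measurable_normalized f :
  bounded_measurable f -> bounded_measurable (normalized f).
Proof. by move=> bf; apply: bounded_measurableM => //; exact: bounded_measurable_cst. Qed.

Lemma normalized_ge0 f : (forall x, 0 <= f x) -> forall x, 0 <= normalized f x.
Proof. by move=> f0 x; rewrite /normalized divr_ge0 // Ex_ge0. Qed.

Lemma Ex_normalized f : bounded_measurable f -> Ex P f != 0 -> Ex P (normalized f) = 1.
Proof. by move=> bf Ef0; rewrite /normalized ExZr // mulfV. Qed.

Lemma Ex_normalized_mul01 f p :
  bounded_measurable f -> (forall x, 0 <= f x) -> 0 < Ex P f ->
  bounded_measurable p -> (forall x, 0 <= p x <= 1) ->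
  0 <= Ex P (fun x => normalized f x * p x) <= 1.
Proof.
move=> bf f0 Ef bp p01; have nf0 := normalized_ge0 f0.
have bnf := bounded_measurable_normalized bf.
apply/andP; split.
  by apply: Ex_ge0 => x; rewrite mulr_ge0 //; case/andP: (p01 x).
rewrite -(Ex_normalized bf (lt0r_neq0 Ef)); apply: le_Ex => // [|x].
  exact: bounded_measurableM.
by rewrite ler_piMr //; case/andP: (p01 x).
Qed.

Lemma Ex_normalized_mix f p s w :
  bounded_measurable f -> Ex P f != 0 -> bounded_measurable p ->
  Ex P (fun x => normalized f x * (s * p x + w))
    = s * Ex P (fun x => normalized f x * p x) + w.
Proof.
move=> bf Ef0 bp; have bnf := bounded_measurable_normalized bf.
have bnfp : bounded_measurable (fun x => normalized f x * p x).
  exact: bounded_measurableM.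
rewrite (eq_Ex (h := fun x => s * (normalized f x * p x) + normalized f x * w)); last first.
  by move=> x; ring.
have bs := bounded_measurable_cst s; have bw := bounded_measurable_cst w.
rewrite ExD ?ExZl ?(ExZr w) ?Ex_normalized ?mul1r //; exact: bounded_measurableM.
Qed.

Lemma dist_Ex_normalized_mul f h p :
  bounded_measurable f -> bounded_measurable h -> Ex P f != 0 -> Ex P h != 0 ->
  bounded_measurable p -> (forall x, 0 <= p x <= 1) ->
  `|Ex P (fun x => normalized h x * p x) - Ex P (fun x => normalized f x * p x)|
    <= Ex P (fun x => `|normalized h x - normalized f x|) / 2.
Proof.
move=> bf bh Ef0 Eh0 bp p01.
have bnf := bounded_measurable_normalized bf.
have bnh := bounded_measurable_normalized bh.
rewrite -ExB; [|exact: bounded_measurableM|exact: bounded_measurableM].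
rewrite (eq_Ex (h := fun x => (normalized h x - normalized f x) * p x)); last first.
  by move=> x; rewrite mulrBl.
apply: normr_Ex_centered_mul => //; first exact: bounded_measurableB.
by rewrite ExB // !Ex_normalized // subrr.
Qed.

Lemma mul_normr_subV (u v : R) : 0 < u -> 0 < v -> u * `|u^-1 - v^-1| = `|v - u| / v.
Proof.
move=> u0 v0; rewrite -[X in _ / X](gtr0_norm v0) -normfV -normrM.
by rewrite -{1}(gtr0_norm u0) -normrM; congr `|_|; field; rewrite !gt_eqF.
Qed.

Lemma Ex_normalized_dist_le f h :
  bounded_measurable f -> bounded_measurable h -> (forall x, 0 <= h x) ->
  0 < Ex P f -> 0 < Ex P h ->
  Ex P (fun x => `|normalized h x - normalized f x|)
    <= 2 * Ex P (fun x => `|h x - f x|) / Ex P f.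
Proof.
move=> bf bh h0 Ef Eh; set a := Ex P h; set b := Ex P f.
have bhf : bounded_measurable (fun x => h x - f x) by exact: bounded_measurableB.
have bhf_norm := bounded_measurable_norm bhf.
have dist_ab : `|b - a| <= Ex P (fun x => `|h x - f x|).
  rewrite /a /b distrC -ExB //; apply: le_trans (le_normr_Ex bhf) _.
  by apply: le_Ex.
apply: (@le_trans _ _ (Ex P (fun x => h x * `|a^-1 - b^-1| + `|h x - f x| * b^-1))).
  apply: le_Ex => [||x].
  - by apply: bounded_measurable_norm; apply: bounded_measurableB;
      exact: bounded_measurable_normalized.
  - by apply: bounded_measurableD; apply: bounded_measurableM => //;
      exact: bounded_measurable_cst.
  - rewrite /normalized -/a -/b.
    have -> : h x / a - f x / b = h x * (a^-1 - b^-1) + (h x - f x) * b^-1 by ring.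
    apply: le_trans (ler_normD _ _) _.
    by rewrite !normrM (ger0_norm (h0 x)) (@ger0_norm _ b^-1) // invr_ge0 ltW.
rewrite ExD; [|by apply: bounded_measurableM => //; exact: bounded_measurable_cst..].
rewrite !ExZr // -/a mul_normr_subV // -mulrDl ler_pM2r ?invr_gt0 //.
lra.
Qed.

End expectation.

Section nonneg_integral.
Context {d : measure_display} {T : measurableType d} {R : realType}.
Variable P : probability T R.
Implicit Types f h : T -> R.
Local Open Scope ereal_scope.

Lemma probability_nonempty : exists x : T, True.
Proof.
apply: contrapT => noT.
have T0 : [set: T] = set0 by apply/seteqP; split => // x _; apply: noT; exists x.
have := probability_setT P; rewrite T0 measure0 => /(congr1 fine)/eqP.
by rewrite /= eq_sym oner_eq0.
Qed.

Lemma integral_cst_probability (c : R) : \int[P]_x c%:E = c%:E.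
Proof. by rewrite integral_cst // -[RHS]mule1 -(probability_setT P). Qed.

Lemma ge0_integralD_EFin f h :
  measurable_fun setT f -> measurable_fun setT h ->
  (forall x, 0 <= f x)%R -> (forall x, 0 <= h x)%R ->
  \int[P]_x (f x + h x)%:E = \int[P]_x (f x)%:E + \int[P]_x (h x)%:E.
Proof.
move=> mf mh f0 h0; under eq_integral do rewrite EFinD.
by apply: ge0_integralD => //; try (by move=> x _; rewrite lee_fin);
  exact/measurable_EFinP.
Qed.

Lemma ge0_le_integral_EFin f h :
  measurable_fun setT f -> measurable_fun setT h ->
  (forall x, 0 <= f x)%R -> (forall x, f x <= h x)%R ->
  \int[P]_x (f x)%:E <= \int[P]_x (h x)%:E.
Proof.
move=> mf mh f0 fh; apply: ge0_le_integral => //.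
- by move=> x _; rewrite lee_fin.
- exact/measurable_EFinP.
- exact/measurable_EFinP.
- by move=> x _; rewrite lee_fin.
Qed.

Lemma ge0_bounded_integral_fin_num f (c : R) :
  measurable_fun setT f -> (forall x, 0 <= f x <= c)%R ->
  \int[P]_x (f x)%:E \is a fin_num.
Proof.
move=> mf f0c; have f0 x := proj1 (andP (f0c x)).
rewrite ge0_fin_numE; last by apply: integral_ge0 => x _; rewrite lee_fin.
apply: le_lt_trans (ge0_le_integral_EFin (h := fun=> c) mf (measurable_cst c) f0 _) _.
  by move=> x; case/andP: (f0c x).
by rewrite integral_cst_probability ltry.
Qed.

End nonneg_integral.

Lemma ge0_le_fin_num {R : realDomainType} (x y : \bar R) :
  (0 <= x)%E -> (x <= y)%E -> y \is a fin_num -> x \is a fin_num.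
Proof.
move=> x0 xy; rewrite !ge0_fin_numE ?(le_trans x0) //; exact: le_lt_trans.
Qed.

Lemma le_ereal_inf_addr {R : realType} (S : set \bar R) (a e : \bar R) :
  e \is a fin_num -> (forall z, S z -> a <= z + e)%E -> (a <= ereal_inf S + e)%E.
Proof.
move=> efin aSe; rewrite -leeBlDr //; apply/ereal_infP => z Sz.
by rewrite leeBlDr // aSe.
Qed.

Lemma compl_ratio_mul {R : realFieldType} (a e : R) : 0 <= a -> 0 <= e ->
  (1 - e / (a + e)) * (a + e) = a.
Proof.
move=> a0 e0; have [ae0|ae_neq0] := eqVneq (a + e) 0.
  by rewrite ae0 mulr0; lra.
by field.
Qed.

Lemma cross_term_le {R : realDomainType} (a ah p ph : R) :
  0 <= p <= 1 -> 0 <= ph <= 1 -> a * ph + ah * p <= a * p + ah * ph + `|ah - a|.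
Proof.
move=> /andP[p0 p1] /andP[ph0 ph1].
have : (a - ah) * (ph - p) <= `|ah - a|.
  apply: le_trans (ler_norm _) _; rewrite normrM distrC -[leRHS]mulr1.
  by rewrite ler_wpM2l // ler_norml; apply/andP; split; lra.
lra.
Qed.

Lemma mix_cost_le {R : realDomainType} (a p t S : R) (b : bool) :
  0 <= a <= S -> 0 <= p <= 1 -> 0 <= t <= 1 ->
  a * ((1 - t) * p + t * b%:R) <= a * p + t * S * b%:R.
Proof.
move=> /andP[a0 aS] /andP[p0 p1] /andP[t0 t1].
have tap0 : 0 <= t * (a * p) by rewrite !mulr_ge0.
have tSa0 : 0 <= t * (S - a) by rewrite mulr_ge0 ?subr_ge0.
by case: b; rewrite /= ?mulr1 ?mulr0 ?addr0; nra.
Qed.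

Lemma sum_indicator {R : pzSemiRingType} (Y : finType) (y0 : Y) :
  \sum_(y : Y) ((y == y0)%:R : R) = 1.
Proof. by rewrite (bigD1 y0) //= eqxx big1 ?addr0 // => y /negbTE ->. Qed.

Section primal_lp.
Context {d : measure_display} {T : measurableType d} {R : realType}
  {Y : finType} {K C : nat}.
Variables (P : probability T R) (yc : 'I_C -> Y) (Ic : 'I_C -> {set 'I_K}).
Implicit Types (r rh : T -> Y -> R) (g gh : T -> 'I_K -> R) (pi : T -> Y -> R).

Definition classifier pi :=
  [/\ (forall x y, 0 <= pi x y), (forall x, \sum_(y : Y) pi x y = 1) &
      (forall y, measurable_fun setT (fun x => pi x y))].

Definition approx_fair g (beta : R) pi := exists q : 'I_C -> R,
  forall c k, k \in Ic c ->
    `|Ex P (fun x => normalized P (fun z => g z k) x * pi x (yc c)) - q c| <= beta / 2.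

Definition group_weights g :=
  [/\ (forall x k, 0 <= g x k <= 1), (forall k, measurable_fun setT (fun x => g x k)) &
      (forall k, 0 < Ex P (fun x => g x k))].

Definition bounded_reward r :=
  [/\ (forall x y, 0 <= r x y), (exists M : R, forall x y, r x y <= M) &
      (forall y, measurable_fun setT (fun x => r x y))].

Definition mix_point (t : R) (y0 : Y) pi x y := (1 - t) * pi x y + t * (y == y0)%:R.

Lemma lp_feasibleP g alpha pi :
  lp_feasible P g yc Ic alpha pi <-> classifier pi /\ approx_fair g alpha pi.
Proof. by split => [[]|[[]]]. Qed.

Lemma classifier01 pi : classifier pi -> forall x y, 0 <= pi x y <= 1.
Proof.
case=> pi0 pi1 _ x y; rewrite pi0 -(pi1 x) (bigD1 y) //= lerDl.
by apply: sumr_ge0 => z _.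
Qed.

Lemma classifier_bounded pi : classifier pi -> forall y, bounded_measurable (fun x => pi x y).
Proof.
move=> cl y; apply: bounded_measurable01 => [|x]; first by case: cl.
exact: classifier01.
Qed.

Lemma classifier_mix_point (t : R) y0 pi :
  0 <= t <= 1 -> classifier pi -> classifier (mix_point t y0 pi).
Proof.
move=> /andP[t0 t1] [pi0 pi1 mpi]; split => [x y|x|y]; rewrite /mix_point.
- by rewrite addr_ge0 ?mulr_ge0 ?subr_ge0.
- by rewrite big_split /= -!mulr_sumr pi1 sum_indicator; ring.
- apply: measurable_funD; last exact: measurable_cst.
  by apply: measurable_funM => //; exact: measurable_cst.
Qed.

Lemma group_weights_bounded g k : group_weights g -> bounded_measurable (fun x => g x k).
Proof. by case=> g01 mg _; apply: bounded_measurable01 => // x; exact: g01. Qed.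

Lemma group_weights_ge0 g k x : group_weights g -> 0 <= g x k.
Proof. by case=> g01 _ _; case/andP: (g01 x k). Qed.

Lemma group_weights_Ex_neq0 g k : group_weights g -> Ex P (fun x => g x k) != 0.
Proof. by case=> _ _ /(_ k) /lt0r_neq0. Qed.

Lemma Ex_weight_classifier01 g k pi y : group_weights g -> classifier pi ->
  0 <= Ex P (fun x => normalized P (fun z => g z k) x * pi x y) <= 1.
Proof.
move=> wg cl; apply: Ex_normalized_mul01.
- exact: group_weights_bounded.
- by move=> x; exact: group_weights_ge0.
- by case: wg.
- exact: classifier_bounded.
- by move=> x; exact: classifier01.
Qed.

Lemma approx_fair1 g pi : group_weights g -> classifier pi -> approx_fair g 1 pi.
Proof.
move=> wg cl; exists (fun=> 2^-1) => c k _.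
have /andP[v0 v1] := Ex_weight_classifier01 k (yc c) wg cl.
by rewrite ler_norml; apply/andP; split; lra.
Qed.

Lemma approx_fair_perturb g g' beta eps pi :
  group_weights g -> group_weights g' -> classifier pi ->
  (forall k, Ex P (fun x => `|normalized P (fun z => g' z k) x
                             - normalized P (fun z => g z k) x|) <= eps) ->
  approx_fair g beta pi -> approx_fair g' (beta + eps) pi.
Proof.
move=> wg wg' cl eps_ge [q fair]; exists q => c k kc.
set v := Ex P (fun x => normalized P (fun z => g z k) x * pi x (yc c)).
apply: le_trans (ler_distD v _ _) _.
have := dist_Ex_normalized_mul (group_weights_bounded k wg)
  (group_weights_bounded k wg') (group_weights_Ex_neq0 k wg)
  (group_weights_Ex_neq0 k wg') (classifier_bounded cl (yc c))
  (fun x => classifier01 cl x (yc c)).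
have := fair c k kc; have := eps_ge k; lra.
Qed.

Lemma approx_fair_mix_point g (beta t : R) y0 pi :
  group_weights g -> 0 <= t <= 1 -> classifier pi ->
  approx_fair g beta pi -> approx_fair g ((1 - t) * beta) (mix_point t y0 pi).
Proof.
move=> wg /andP[t0 t1] cl [q fair].
exists (fun c => (1 - t) * q c + t * (yc c == y0)%:R) => c k kc.
rewrite /mix_point.
rewrite (Ex_normalized_mix (f := fun z => g z k) (p := fun x => pi x (yc c))); first last.
- exact: classifier_bounded.
- exact: group_weights_Ex_neq0.
- exact: group_weights_bounded.
set v := Ex P _.
have -> : (1 - t) * v + t * (yc c == y0)%:R - ((1 - t) * q c + t * (yc c == y0)%:R)
          = (1 - t) * (v - q c) by ring.
by rewrite normrM ger0_norm ?subr_ge0 // -mulrA ler_wpM2l ?subr_ge0 // fair.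
Qed.

Lemma approx_fair_gap g beta pi c k k' : approx_fair g beta pi ->
  k \in Ic c -> k' \in Ic c ->
  `|Ex P (fun x => normalized P (fun z => g z k) x * pi x (yc c))
    - Ex P (fun x => normalized P (fun z => g z k') x * pi x (yc c))| <= beta.
Proof.
move=> [q fair] kc k'c; apply: le_trans (ler_distD (q c) _ _) _.
by rewrite [X in _ + X]distrC (splitr beta) lerD ?fair.
Qed.

Lemma sup_norm_ge r : bounded_reward r -> forall x y, r x y <= sup_norm r.
Proof.
case=> _ [M rM] _ x y; apply: ub_le_sup; last by exists x => //; exists y.
by exists M => _ [x' _ [y' _ <-]].
Qed.

Lemma measurable_lp_integrand r pi :
  (forall y, measurable_fun setT (fun x => r x y)) -> classifier pi ->
  measurable_fun setT (fun x => \sum_(y : Y) r x y * pi x y).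
Proof.
by move=> mr [_ _ mpi]; apply: measurable_sum => y; exact: measurable_funM.
Qed.

Lemma lp_integrand_ge0 r pi : (forall x y, 0 <= r x y) -> classifier pi ->
  forall x, 0 <= \sum_(y : Y) r x y * pi x y.
Proof. by move=> r0 [pi0 _ _] x; apply: sumr_ge0 => y _; exact: mulr_ge0. Qed.

Lemma eps_g_ge0 g gh : 0 <= eps_g P gh g.
Proof. by apply/bigmax_geP; left. Qed.

Lemma eps_gC g gh : eps_g P gh g = eps_g P g gh.
Proof. by apply: eq_bigr => k _; apply: eq_Ex => x; rewrite distrC. Qed.

Lemma le_eps_g g gh k :
  Ex P (fun x => `|normalized P (fun z => gh z k) x - normalized P (fun z => g z k) x|)
    <= eps_g P gh g.
Proof. exact: (le_bigmax _ (fun k => Ex P (fun x => `|_|))). Qed.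

Lemma eps_g_le g gh : group_weights g -> group_weights gh ->
  eps_g P gh g <= \big[Num.max/0]_(k < K)
    (2 * Ex P (fun x => `|gh x k - g x k|) / Ex P (fun x => g x k)).
Proof.
move=> wg wgh; apply: le_bigmax2 => k _; apply: Ex_normalized_dist_le.
- exact: group_weights_bounded.
- exact: group_weights_bounded.
- by move=> x; exact: group_weights_ge0.
- by case: wg.
- by case: wgh.
Qed.

Theorem lp_plugin_weights_fair g gh alpha pih c k k' :
  group_weights g -> group_weights gh -> lp_feasible P gh yc Ic alpha pih ->
  k \in Ic c -> k' \in Ic c ->
  `|Ex P (fun x => (g x k / Ex P (fun z => g z k)
                    - g x k' / Ex P (fun z => g z k')) * pih x (yc c))|
    <= Num.min 1 (alpha + eps_g P gh g).
Proof.
move=> wg wgh /lp_feasibleP[cl fair] kc k'c.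
have bw j : bounded_measurable (fun x => normalized P (fun z => g z j) x * pih x (yc c)).
  apply: bounded_measurableM; last exact: classifier_bounded.
  by apply: bounded_measurable_normalized; exact: group_weights_bounded.
rewrite (eq_Ex P (h := fun x => normalized P (fun z => g z k) x * pih x (yc c)
                            - normalized P (fun z => g z k') x * pih x (yc c))); last first.
  by move=> x; rewrite mulrBl.
rewrite ExB // le_min; apply/andP; split.
  have /andP[v0 v1] := Ex_weight_classifier01 k (yc c) wg cl.
  have /andP[v0' v1'] := Ex_weight_classifier01 k' (yc c) wg cl.
  by rewrite ler_norml; apply/andP; split; lra.
apply: approx_fair_gap kc k'c; apply: approx_fair_perturb fair => // j.
by rewrite eps_gC; exact: le_eps_g.
Qed.

Local Open Scope ereal_scope.

Lemma lp_obj_ge0 r pi : (forall x y, 0 <= r x y)%R -> classifier pi -> 0 <= lp_obj P r pi.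
Proof.
by move=> r0 cl; apply: integral_ge0 => x _; rewrite lee_fin lp_integrand_ge0.
Qed.

Lemma lp_opt_ge0 r g alpha : (forall x y, 0 <= r x y)%R -> 0 <= lp_opt P r g yc Ic alpha.
Proof.
by move=> r0; apply/ereal_infP => _ [pi /lp_feasibleP[cl _] <-]; exact: lp_obj_ge0.
Qed.

Lemma lp_obj_fin_num r pi : bounded_reward r -> classifier pi -> lp_obj P r pi \is a fin_num.
Proof.
move=> [r0 [M rM] mr] cl; apply: (ge0_bounded_integral_fin_num P (c := (\sum_(y : Y) M)%R)).
  exact: measurable_lp_integrand.
move=> x; rewrite lp_integrand_ge0 //=; apply: ler_sum => y _.
have /andP[_ pi1] := classifier01 cl x y.
by rewrite -[leRHS]mulr1; apply: ler_pM => //; case: cl.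
Qed.

Lemma lp_obj_mix_point r (t : R) y0 pi : bounded_reward r -> (0 <= t <= 1)%R -> classifier pi ->
  lp_obj P r (mix_point t y0 pi) <= lp_obj P r pi + (t * sup_norm r)%:E.
Proof.
move=> rr t01 cl; have [r0 _ mr] := rr; have /andP[t0 t1] := t01.
have S_ge := sup_norm_ge rr; have [x0 _] := probability_nonempty P.
have tS0 : T -> (0 <= t * sup_norm r)%R.
  by move=> _; rewrite mulr_ge0 // (le_trans (r0 x0 y0)).
have m_tS : measurable_fun [set: T] (fun=> (t * sup_norm r)%R) by exact: measurable_cst.
have m_obj := measurable_lp_integrand mr cl; have obj0 := lp_integrand_ge0 r0 cl.
have cl' := classifier_mix_point y0 t01 cl.
rewrite /lp_obj -(integral_cst_probability P) -ge0_integralD_EFin //.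
apply: ge0_le_integral_EFin => [|||x].
- exact: measurable_lp_integrand.
- by apply: measurable_funD; [exact: measurable_lp_integrand | exact: measurable_cst].
- exact: lp_integrand_ge0.
rewrite -[(t * _)%R]mulr1 -(sum_indicator (R := R) y0) mulr_sumr -big_split /=.
apply: ler_sum => y _; rewrite /mix_point.
apply: mix_cost_le (classifier01 cl x y) t01.
by rewrite r0 S_ge.
Qed.

Section plugin_reward.
Variables (r rh : T -> Y -> R).
Hypotheses (r0 : forall x y, (0 <= r x y)%R) (rh0 : forall x y, (0 <= rh x y)%R).
Hypotheses (mr : forall y, measurable_fun setT (fun x => r x y))
  (mrh : forall y, measurable_fun setT (fun x => rh x y)).

Let m_dist : measurable_fun setT (fun x => \sum_(y : Y) `|rh x y - r x y|)%R.
Proof.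
by apply: measurable_sum => y; apply: measurableT_comp => //; exact: measurable_funB.
Qed.

Let dist0 x : (0 <= \sum_(y : Y) `|rh x y - r x y|)%R.
Proof. exact: sumr_ge0. Qed.

Lemma lp_obj_le_add_eps_r pi : classifier pi ->
  lp_obj P rh pi <= lp_obj P r pi + eps_r P rh r.
Proof.
move=> cl; have m_r_pi := measurable_lp_integrand mr cl.
have r_pi0 := lp_integrand_ge0 r0 cl.
rewrite /lp_obj /eps_r -ge0_integralD_EFin //.
apply: ge0_le_integral_EFin => [|||x].
- exact: measurable_lp_integrand.
- exact: measurable_funD.
- exact: lp_integrand_ge0.
rewrite -big_split /=; apply: ler_sum => y _.
have /andP[p0 p1] := classifier01 cl x y.
rewrite -lerBlDl -mulrBl; apply: le_trans (ler_norm _) _.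
by rewrite normrM (ger0_norm p0) -[leRHS]mulr1 ler_wpM2l.
Qed.

Lemma lp_obj_exchange pi pih : classifier pi -> classifier pih ->
  lp_obj P r pih + lp_obj P rh pi <= lp_obj P r pi + lp_obj P rh pih + eps_r P rh r.
Proof.
move=> cl_pi cl_pih.
have m_r_pi := measurable_lp_integrand mr cl_pi.
have m_r_pih := measurable_lp_integrand mr cl_pih.
have m_rh_pi := measurable_lp_integrand mrh cl_pi.
have m_rh_pih := measurable_lp_integrand mrh cl_pih.
have r_pi0 := lp_integrand_ge0 r0 cl_pi; have r_pih0 := lp_integrand_ge0 r0 cl_pih.
have rh_pi0 := lp_integrand_ge0 rh0 cl_pi; have rh_pih0 := lp_integrand_ge0 rh0 cl_pih.
rewrite /lp_obj /eps_r -!ge0_integralD_EFin //;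
  [|exact: measurable_funD | by move=> x; rewrite addr_ge0].
apply: ge0_le_integral_EFin => [||x|x].
- exact: measurable_funD.
- by apply: measurable_funD => //; exact: measurable_funD.
- by rewrite addr_ge0.
rewrite -!big_split /=; apply: ler_sum => y _.
exact: cross_term_le (classifier01 cl_pi x y) (classifier01 cl_pih x y).
Qed.

End plugin_reward.

Theorem lp_plugin_reward r rh g alpha pih :
  bounded_reward r -> (forall x y, 0 <= rh x y)%R ->
  (forall y, measurable_fun setT (fun x => rh x y)) ->
  lp_minimizer P rh g yc Ic alpha pih ->
  lp_obj P r pih <= lp_opt P r g yc Ic alpha + eps_r P rh r.
Proof.
move=> rr rh0 mrh [/lp_feasibleP[cl_pih _] pih_min]; have [r0 _ mr] := rr.
have [->|eps_neq_oo] := eqVneq (eps_r P rh r) +oo.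
  by rewrite addey ?leey // gt_eqF // (lt_le_trans ltNy0) ?lp_opt_ge0.
have eps_fin : eps_r P rh r \is a fin_num.
  by rewrite ge0_fin_numE ?ltey // integral_ge0 // => x _; rewrite lee_fin sumr_ge0.
apply: le_ereal_inf_addr => // _ [pi pi_feas <-]; have /lp_feasibleP[cl_pi _] := pi_feas.
have rh_pi_fin : lp_obj P rh pi \is a fin_num.
  apply: ge0_le_fin_num (lp_obj_ge0 rh0 cl_pi) (lp_obj_le_add_eps_r r0 rh0 mr mrh cl_pi) _.
  by rewrite fin_numD eps_fin lp_obj_fin_num.
rewrite -(leeD2rE _ _ rh_pi_fin); apply: le_trans (lp_obj_exchange r0 rh0 mr mrh cl_pi cl_pih) _.
by rewrite addeAC leeD // pih_min.
Qed.

Theorem lp_plugin_weights_obj r g gh (alpha : R) pih :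
  bounded_reward r -> group_weights g -> group_weights gh -> (0 <= alpha <= 1)%R ->
  lp_minimizer P r gh yc Ic alpha pih ->
  lp_obj P r pih <= lp_opt P r g yc Ic alpha
    + (2 * sup_norm r * Num.min (1 - alpha) (eps_g P gh g / (alpha + eps_g P gh g)))%:E.
Proof.
move=> rr wg wgh /andP[alpha0 alpha1] [pih_feas pih_min].
have eps0 := eps_g_ge0 g gh; set eps := eps_g P gh g in eps0 *.
set t := Num.min (1 - alpha)%R (eps / (alpha + eps))%R.
have t01 : (0 <= t <= 1)%R.
  by rewrite le_min subr_ge0 alpha1 divr_ge0 ?addr_ge0 //= ge_min lerBlDr lerDl alpha0.
have [x0 _] := probability_nonempty P.
have [y0 _] : exists y : Y, True.
  have /lp_feasibleP[[_ /(_ x0) + _] _] := pih_feas.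
  case: (pickP (@predT Y)) => [y0 _ _|noY]; first by exists y0.
  by rewrite big_pred0 // => /esym/eqP; rewrite oner_eq0.
have S0 : (0 <= sup_norm r)%R.
  by have [r0 _ _] := rr; exact: le_trans (r0 x0 y0) (sup_norm_ge rr x0 y0).
apply: le_ereal_inf_addr => // _ [pi /lp_feasibleP[cl_pi fair_pi] <-].
have mix_feas : lp_feasible P gh yc Ic alpha (mix_point t y0 pi).
  apply/lp_feasibleP; split; first exact: classifier_mix_point.
  have [t_alpha|t_eps] := leP (1 - alpha)%R (eps / (alpha + eps))%R.
    have -> : alpha = ((1 - t) * 1)%R by rewrite /t min_l //; ring.
    by apply: approx_fair_mix_point => //; exact: approx_fair1.
  have -> : alpha = ((1 - t) * (alpha + eps))%R by rewrite /t min_r ?ltW ?compl_ratio_mul.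
  apply: approx_fair_mix_point => //; apply: approx_fair_perturb fair_pi => // k.
  exact: le_eps_g.
apply: le_trans (pih_min _ mix_feas) _; apply: le_trans (lp_obj_mix_point _ rr t01 cl_pi) _.
have /andP[t0 _] := t01.
by rewrite leeD2l ?lp_obj_fin_num // lee_fin [leRHS]mulrC mulrCA ler_peMl ?mulr_ge0 ?ler1n.
Qed.

End primal_lp.

Theorem theorem2 (d : measure_display) (T : measurableType d) (R : realType)
  (Y : finType) (K C : nat) (P : probability T R)
  (r : T -> Y -> R) (g : T -> 'I_K -> R)
  (yc : 'I_C -> Y) (Ic : 'I_C -> {set 'I_K}) (alpha : R)
  (r_ge0 : forall x y, 0 <= r x y)
  (r_bdd : exists M : R, forall x y, r x y <= M)
  (r_meas : forall y, measurable_fun setT (fun x => r x y))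
  (g_01 : forall x k, 0 <= g x k <= 1)
  (g_meas : forall k, measurable_fun setT (fun x => g x k))
  (Eg_gt0 : forall k, 0 < Ex P (fun x => g x k))
  (alpha_01 : 0 <= alpha <= 1) :
  (* Part 1 *)
  (forall (rh : T -> Y -> R),
     (forall x y, 0 <= rh x y) ->
     (forall y, measurable_fun setT (fun x => rh x y)) ->
     forall pih : T -> Y -> R,
       lp_minimizer P rh g yc Ic alpha pih ->
       (lp_obj P r pih <= lp_opt P r g yc Ic alpha + eps_r P rh r)%E)
  /\
  (* Part 2 *)
  (forall (gh : T -> 'I_K -> R),
     (forall x k, 0 <= gh x k <= 1) ->
     (forall k, measurable_fun setT (fun x => gh x k)) ->
     (forall k, 0 < Ex P (fun x => gh x k)) ->
     let eps := eps_g P gh g in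
     eps <= \big[Num.max/0]_(k < K)
              (2 * Ex P (fun x => `|gh x k - g x k|) / Ex P (fun x => g x k))
     /\
     forall pih : T -> Y -> R,
       lp_minimizer P r gh yc Ic alpha pih ->
       (lp_obj P r pih <= lp_opt P r g yc Ic alpha
          + (2 * sup_norm r * Num.min (1 - alpha) (eps / (alpha + eps)))%:E)%E
       /\
       (forall c k k', k \in Ic c -> k' \in Ic c ->
          `| Ex P (fun x => (g x k / Ex P (fun z => g z k)
                             - g x k' / Ex P (fun z => g z k')) * pih x (yc c)) |
            <= Num.min 1 (alpha + eps))).
Proof.
have rr : bounded_reward r by split.
have wg : group_weights P g by split.
split=> [rh rh0 mrh pih pih_min | gh gh01 mgh Egh eps].
  exact: lp_plugin_reward.
have wgh : group_weights P gh by split.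
split=> [|pih pih_min]; first exact: eps_g_le.
split=> [|c k k' kc k'c]; first exact: lp_plugin_weights_obj.
exact: lp_plugin_weights_fair pih_min.1 kc k'c.
Qed.
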